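(* Let $n\ge 3$ be odd and let $C,\widetilde C$ be self-dual codes in $\mathbb{F}_2^{n+1}$. Then there exists an orthogonal matrix $P\in\mathcal{O}_n(\mathbb{F}_2)$ such that $\widetilde C=(P\oplus 1)C$ and, moreover, for every basis $\mathcal{B}=\{\mathbf{y}_1,\ldots,\mathbf{y}_m\}\in\mathfrak{B}_C$, the set $\widetilde{\mathcal{B}}=\{(P\oplus1)\mathbf{y}_1,\ldots,(P\oplus1)\mathbf{y}_m\}$ lies in $\mathfrak{B}_{\widetilde C}$ and: (i) $\mathcal{B}\in\mathfrak{B}_C^2$ iff $\widetilde{\mathcal{B}}\in\mathfrak{B}_{\widetilde C}^2$; (ii) if $A'_{\mathcal{B}}\in\mathcal{F}_C$ then $PA'_{\mathcal{B}}P^{\top}=A'_{\widetilde{\mathcal{B}}}\in\mathcal{F}_{\widetilde C}$; (iii) if $A''_{\mathcal{B}}\in\mathcal{F}_C$ then $PA''_{\mathcal{B}}P^{\top}=A''_{\widetilde{\mathcal{B}}}\in\mathcal{F}_{\widetilde C}$; (iv) $\{PAP^{\top}:A\in\mathcal{F}_C\}=\mathcal{F}_{\widetilde C}$.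
   Context: $\mathbb{F}_2$ is the binary field. $\mathcal{O}_n(\mathbb{F}_2)$ is the group of $P\in GL_n(\mathbb{F}_2)$ with $P^{\top}=P^{-1}$; $P\oplus 1$ is the $(n+1)\times(n+1)$ block-diagonal matrix with blocks $P$ and $1$, and $(P\oplus1)C=\{(P\oplus1)\mathbf{y}:\mathbf{y}\in C\}$. A code $C\subseteq\mathbb{F}_2^{n+1}$ is self-dual if $C=C^\perp$ (standard dot product); then $\dim C=m:=\frac{n+1}{2}$. For $\mathbf{y}\in\mathbb{F}_2^{n+1}$, $\underline{\mathbf{y}}\in\mathbb{F}_2^n$ is $\mathbf{y}$ with its last entry deleted; $\mathbf{x}^2:=\mathbf{x}\mathbf{x}^{\top}$. $\mathfrak{B}_C$ is the set of bases of $C$, $\mathfrak{B}_C^2$ those bases containing an even number of vectors with last entry $1$. For $\mathcal{B}=\{\mathbf{y}_1,\ldots,\mathbf{y}_m\}\in\mathfrak{B}_C$, $A'_{\mathcal{B}}=I_n+\sum_{i=1}^m\underline{\mathbf{y}_i}^2$ and $A''_{\mathcal{B}}=I_n+\sum_{i=1}^m\underline{\mathbf{y}_i}^2+(\underline{\mathbf{y}_1}+\cdots+\underline{\mathbf{y}_m})^2$. $\mathcal{F}_C=\{A'_{\mathcal{B}}:\mathcal{B}\in\mathfrak{B}_C^2\}\cup\{A''_{\mathcal{B}}:\mathcal{B}\in\mathfrak{B}_C\}$ if $m$ is even, and $\mathcal{F}_C=\{A'_{\mathcal{B}}:\mathcal{B}\in\mathfrak{B}_C^2\}$ if $m$ is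 odd. *)

From HB Require Import structures.
From mathcomp Require Import all_boot all_order all_algebra.
Set Implicit Arguments. Unset Strict Implicit. Unset Printing Implicit Defensive.
Import GRing.Theory.
Local Open Scope ring_scope.

Notation F2 := 'F_2.

Definition dual_code (k : nat) (C : {set 'cV[F2]_k}) : {set 'cV[F2]_k} :=
  [set x | [forall y in C, x^T *m y == 0]].

Definition self_dual (k : nat) (C : {set 'cV[F2]_k}) : Prop := C = dual_code C.

Definition is_basis (k : nat) (C : {set 'cV[F2]_k}) (s : seq 'cV[F2]_k) : Prop :=
  free s /\ forall x, (x \in C) = (x \in <<s>>%VS).

Definition last_entry (n : nat) (y : 'cV[F2]_n.+1) : F2 := y ord_max 0.

Definition even_basis (n : nat) (C : {set 'cV[F2]_n.+1}) (s : seq 'cV[F2]_n.+1) : Prop :=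
  is_basis C s /\ ~~ odd (count (fun y => last_entry y == 1) s).

Definition under (n : nat) (y : 'cV[F2]_n.+1) : 'cV[F2]_n :=
  \col_(i < n) y (widen_ord (leqnSn n) i) 0.

Definition sqv (n : nat) (x : 'cV[F2]_n) : 'M[F2]_n := x *m x^T.

Definition Aprime (n : nat) (s : seq 'cV[F2]_n.+1) : 'M[F2]_n :=
  1%:M + \sum_(y <- s) sqv (under y).

Definition Adprime (n : nat) (s : seq 'cV[F2]_n.+1) : 'M[F2]_n :=
  1%:M + \sum_(y <- s) sqv (under y) + sqv (\sum_(y <- s) under y).

(* membership in the family F_C, with m = (n+1)/2 *)
Definition inF (n : nat) (C : {set 'cV[F2]_n.+1}) (A : 'M[F2]_n) : Prop :=
  (exists s, even_basis C s /\ A = Aprime s)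
  \/ (~~ odd (n.+1)./2 /\ exists s, is_basis C s /\ A = Adprime s).

Definition dsum1 (n : nat) (P : 'M[F2]_n) : 'M[F2]_n.+1 :=
  castmx (addn1 n, addn1 n) (block_mx P 0 0 (1%:M : 'M[F2]_1)).

Definition orthogonal_mx (n : nat) (P : 'M[F2]_n) : Prop :=
  P \in unitmx /\ P^T = invmx P.

Definition image_code (k : nat) (Q : 'M[F2]_k) (C : {set 'cV[F2]_k}) : {set 'cV[F2]_k} :=
  [set Q *m y | y in C].

From HB Require Import structures.
From mathcomp Require Import all_boot all_order all_algebra.
Set Implicit Arguments. Unset Strict Implicit. Unset Printing Implicit Defensive.
Import GRing.Theory.
Local Open Scope ring_scope.

(* Existence: choose an orthogonal P minimising the number of words of Ct missing
   from (P (+) 1) C.  If x in Ct is missing, self-duality gives a in (P (+) 1) C with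
   x.a = 1, and adding the all-ones word (which lies in every binary self-dual code)
   if necessary, a has the same last entry as x.  Then v = a + x is isotropic with
   last entry 0, so the transvection w |-> w + (w.v) v is T (+) 1 for an orthogonal T;
   it maps a to x and fixes every word of Ct orthogonal to v, i.e. all of
   Ct /\ (P (+) 1) C, contradicting minimality.  Everything else is transport of
   structure along P (+) 1, which preserves last entries and maps [under y] to
   P [under y]. *)

Lemma F2_cases (x : F2) : x = 0 \/ x = 1.
Proof. by case: x => [[|[|k]] //= lt_k2]; [left | right]; apply: val_inj. Qed.

Lemma F2_addxx (x : F2) : x + x = 0.
Proof. by rewrite addrr_pchar2 // pchar_Fp. Qed.

Lemma F2_mulxx (x : F2) : x * x = x.
Proof. by case: (F2_cases x) => ->; rewrite ?mul0r ?mul1r. Qed.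

Lemma F2_neq0 (x : F2) : x != 0 -> x = 1.
Proof. by case: (F2_cases x) => ->; rewrite ?eqxx. Qed.

Lemma F2_neq_add1 (a b : F2) : a != b -> a + 1 = b.
Proof.
by case: (F2_cases a) => ->; case: (F2_cases b) => ->; rewrite ?eqxx ?add0r ?F2_addxx.
Qed.

Lemma F2_mx_addxx m k (M : 'M[F2]_(m, k)) : M + M = 0.
Proof. by apply/matrixP => i j; rewrite !mxE F2_addxx. Qed.

Section Dot.
Variables (R : comNzRingType) (k : nat).
Implicit Types (x y z : 'cV[R]_k) (P : 'M[R]_k).

Definition dot x y : R := (x^T *m y) 0 0.

Lemma dotE x y : dot x y = \sum_i x i 0 * y i 0.
Proof. by rewrite /dot mxE; apply: eq_bigr => i _; rewrite mxE. Qed.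

Lemma dotC x y : dot x y = dot y x.
Proof. by rewrite !dotE; apply: eq_bigr => i _; rewrite mulrC. Qed.

Lemma dotDl x y z : dot (x + y) z = dot x z + dot y z.
Proof. by rewrite /dot linearD mulmxDl mxE. Qed.

Lemma dotDr x y z : dot x (y + z) = dot x y + dot x z.
Proof. by rewrite dotC dotDl !(dotC x). Qed.

Lemma trmx_mul_eq0 x y : (x^T *m y == 0) = (dot x y == 0).
Proof.
rewrite /dot; apply/eqP/eqP => [-> | xy0]; first by rewrite mxE.
by apply/matrixP => i j; rewrite !ord1 xy0 mxE.
Qed.

Lemma mulmx_trmx x y : x *m (x^T *m y) = dot x y *: x.
Proof. by apply/matrixP => i j; rewrite !ord1 !mxE big_ord1 mulrC. Qed.

Lemma dot_mulmx P x y : P^T *m P = 1%:M -> dot (P *m x) (P *m y) = dot x y.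
Proof. by move=> PtP; rewrite /dot trmx_mul -mulmxA (mulmxA P^T) PtP mul1mx. Qed.

End Dot.

Lemma in_dual_code k (C : {set 'cV[F2]_k}) x :
  (x \in dual_code C) = [forall y in C, dot x y == 0].
Proof. by rewrite inE; apply: eq_forallb => y; rewrite trmx_mul_eq0. Qed.

Lemma dot_const1 k (x : 'cV[F2]_k) : dot (const_mx 1) x = dot x x.
Proof. by rewrite !dotE; apply: eq_bigr => i _; rewrite mxE mul1r F2_mulxx. Qed.

Section SelfDual.
Variables (k : nat) (C : {set 'cV[F2]_k}).
Hypothesis sdC : self_dual C.

Lemma self_dual_dot x y : x \in C -> y \in C -> dot x y = 0.
Proof. by rewrite {1}sdC in_dual_code => /forall_inP xC yC; apply/eqP/xC. Qed.

Lemma orthogonal_sub_self_dual (D : {set 'cV[F2]_k}) :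
  (forall x y, x \in D -> y \in C -> dot x y = 0) -> D \subset C.
Proof.
move=> orthDC; apply/subsetP => x xD; rewrite sdC in_dual_code.
by apply/forall_inP => y yC; rewrite orthDC.
Qed.

Lemma self_dual_add x y : x \in C -> y \in C -> x + y \in C.
Proof.
move=> xC yC; rewrite sdC in_dual_code; apply/forall_inP => z zC.
by rewrite dotDl !self_dual_dot ?addr0.
Qed.

Lemma self_dual_const1 : const_mx 1 \in C.
Proof.
by rewrite sdC in_dual_code; apply/forall_inP => z zC; rewrite dot_const1 self_dual_dot.
Qed.

End SelfDual.

Lemma self_dual_subset_eq k (C D : {set 'cV[F2]_k}) :
  self_dual C -> self_dual D -> C \subset D -> C = D.
Proof.
move=> sdC sdD sCD; apply/eqP; rewrite eqEsubset sCD /=.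
apply: (orthogonal_sub_self_dual sdC) => x y xD yC.
by rewrite (self_dual_dot sdD xD) // (subsetP sCD).
Qed.

Section LastCoordinate.
Variable n : nat.
Implicit Types (y z : 'cV[F2]_n.+1) (P Q : 'M[F2]_n).

Lemma underD y z : under (y + z) = under y + under z.
Proof. by apply/matrixP => i j; rewrite !mxE. Qed.

Lemma underZ c y : under (c *: y) = c *: under y.
Proof. by apply/matrixP => i j; rewrite !mxE. Qed.

Lemma last_entryD y z : last_entry (y + z) = last_entry y + last_entry z.
Proof. by rewrite /last_entry mxE. Qed.

Lemma last_entryZ c y : last_entry (c *: y) = c * last_entry y.
Proof. by rewrite /last_entry mxE. Qed.

Lemma dot_under y z : dot y z = dot (under y) (under z) + last_entry y * last_entry z.
Proof.
by rewrite !dotE big_ord_recr; congr (_ + _); apply: eq_bigr => i _; rewrite !mxE.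
Qed.

Lemma under_last_inj y z : under y = under z -> last_entry y = last_entry z -> y = z.
Proof.
move=> /matrixP eq_under eq_last; apply/matrixP => i j; rewrite !ord1.
case: (unliftP ord_max i) => [i' -> | ->]; last exact: eq_last.
have := eq_under (cast_ord (pred_Sn n) i') 0.
by rewrite !mxE; congr (y _ _ = z _ _); apply: val_inj; rewrite /= /bump leqNgt ltn_ord.
Qed.

Lemma cast_widen_ord i :
  cast_ord (esym (addn1 n)) (widen_ord (leqnSn n) i) = lshift 1 i.
Proof. exact: val_inj. Qed.

Lemma cast_ord_max : cast_ord (esym (addn1 n)) ord_max = rshift n (0 : 'I_1).
Proof. by apply: val_inj; rewrite /= addn0. Qed.

Lemma under_dsum1 P y : under (dsum1 P *m y) = P *m under y.
Proof.
apply/matrixP => i j; rewrite !mxE big_ord_recr /= /dsum1 !castmxE /=.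
rewrite cast_widen_ord cast_ord_max block_mxEur mxE mul0r addr0.
by apply: eq_bigr => l _; rewrite castmxE /= !cast_widen_ord block_mxEul !mxE.
Qed.

Lemma last_dsum1 P y : last_entry (dsum1 P *m y) = last_entry y.
Proof.
rewrite /last_entry mxE big_ord_recr /= /dsum1 castmxE /= cast_ord_max block_mxEdr.
rewrite mxE mul1r big1 ?add0r // => l _.
by rewrite castmxE /= cast_ord_max cast_widen_ord block_mxEdl mxE mul0r.
Qed.

Lemma dsum1_mulmx P Q y : dsum1 (P *m Q) *m y = dsum1 P *m (dsum1 Q *m y).
Proof. by apply: under_last_inj; rewrite ?last_dsum1 // !under_dsum1 mulmxA. Qed.

End LastCoordinate.

Section Orthogonal.
Variable n : nat.
Implicit Types (P Q : 'M[F2]_n) (u : 'cV[F2]_n).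

Lemma orthogonal_mxP P : orthogonal_mx P <-> P^T *m P = 1%:M.
Proof.
split=> [[uP ->] | PtP]; first exact: mulVmx.
have [_ uP] := mulmx1_unit PtP; split=> //.
by rewrite -[P^T]mulmx1 -(mulmxV uP) mulmxA PtP mul1mx.
Qed.

Lemma orthogonal_mx_mulmx_tr P : orthogonal_mx P -> P *m P^T = 1%:M.
Proof. by case=> uP ->; exact: mulmxV. Qed.

Lemma orthogonal_mx_tr P : orthogonal_mx P -> orthogonal_mx P^T.
Proof. by move=> /orthogonal_mx_mulmx_tr PPt; apply/orthogonal_mxP; rewrite trmxK. Qed.

Lemma orthogonal_mx_mul P Q :
  orthogonal_mx P -> orthogonal_mx Q -> orthogonal_mx (P *m Q).
Proof.
move=> /orthogonal_mxP PtP /orthogonal_mxP QtQ; apply/orthogonal_mxP.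
by rewrite trmx_mul mulmxA -(mulmxA Q^T) PtP mulmx1.
Qed.

Definition transvection u : 'M[F2]_n := 1%:M + sqv u.

Lemma transvectionE u w : transvection u *m w = w + dot u w *: u.
Proof. by rewrite mulmxDl mul1mx /sqv -mulmxA mulmx_trmx. Qed.

Lemma orthogonal_mx_transvection u : dot u u = 0 -> orthogonal_mx (transvection u).
Proof.
move=> uu0; apply/orthogonal_mxP.
have -> : (transvection u)^T = transvection u.
  by rewrite /transvection /sqv raddfD /= trmx1 trmx_mul trmxK.
have sqv2 : sqv u *m sqv u = 0.
  by rewrite /sqv mulmxA -(mulmxA u) mulmx_trmx uu0 scale0r mul0mx.
rewrite /transvection mulmxDl mul1mx mulmxDr mulmx1 sqv2 addr0.
by rewrite -addrA F2_mx_addxx addr0.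
Qed.

End Orthogonal.

Lemma dsum1_transvection n (v w : 'cV[F2]_n.+1) : last_entry v = 0 ->
  dsum1 (transvection (under v)) *m w = w + dot w v *: v.
Proof.
move=> v_last; apply: under_last_inj.
  by rewrite under_dsum1 transvectionE underD underZ dot_under v_last mulr0 addr0 dotC.
by rewrite last_dsum1 last_entryD last_entryZ v_last mulr0 addr0.
Qed.

Section OrthogonalImage.
Variables (n : nat) (P : 'M[F2]_n).
Hypothesis oP : orthogonal_mx P.
Implicit Types (y z : 'cV[F2]_n.+1) (C : {set 'cV[F2]_n.+1}).

Lemma dot_dsum1 y z : dot (dsum1 P *m y) (dsum1 P *m z) = dot y z.
Proof.
rewrite dot_under (dot_under y) !under_dsum1 !last_dsum1.
by rewrite dot_mulmx //; apply/orthogonal_mxP.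
Qed.

Lemma dsum1_trK y : dsum1 P^T *m (dsum1 P *m y) = y.
Proof.
apply: under_last_inj; rewrite ?last_dsum1 // !under_dsum1 mulmxA.
by move/orthogonal_mxP: oP => ->; rewrite mul1mx.
Qed.

Lemma dsum1_Ktr y : dsum1 P *m (dsum1 P^T *m y) = y.
Proof.
apply: under_last_inj; rewrite ?last_dsum1 // !under_dsum1 mulmxA.
by rewrite orthogonal_mx_mulmx_tr // mul1mx.
Qed.

Lemma image_code_trK C : image_code (dsum1 P^T) (image_code (dsum1 P) C) = C.
Proof.
apply/setP => x; apply/imsetP/idP => [[_ /imsetP [y yC ->] ->] | xC].
  by rewrite dsum1_trK.
by exists (dsum1 P *m x); [apply: imset_f | rewrite dsum1_trK].
Qed.

Lemma self_dual_image C : self_dual C -> self_dual (image_code (dsum1 P) C).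
Proof.
move=> sdC; apply/setP => x; rewrite in_dual_code.
apply/imsetP/forall_inP => [[y yC ->] _ /imsetP [z zC ->] | orth_x].
  by rewrite dot_dsum1 (self_dual_dot sdC).
exists (dsum1 P^T *m x); last by rewrite dsum1_Ktr.
rewrite sdC in_dual_code; apply/forall_inP => z zC.
by rewrite -dot_dsum1 dsum1_Ktr orth_x ?imset_f.
Qed.

End OrthogonalImage.

Section Pivot.
Variables (n : nat) (A Ct : {set 'cV[F2]_n.+1}).
Hypotheses (sdA : self_dual A) (sdCt : self_dual Ct).
Variable x : 'cV[F2]_n.+1.
Hypotheses (xCt : x \in Ct) (xNA : x \notin A).

Lemma exists_pivot : exists2 a, a \in A & dot x a = 1 /\ last_entry a = last_entry x.
Proof.
have [a aA xa] : exists2 a, a \in A & dot x a != 0.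
  by move: xNA; rewrite {1}sdA in_dual_code => /forall_inPn [a]; exists a.
have [last_a | last_aN] := eqVneq (last_entry a) (last_entry x).
  by exists a => //; split; first exact: F2_neq0.
exists (a + const_mx 1); first by rewrite self_dual_add // self_dual_const1.
split; last by rewrite last_entryD {2}/last_entry mxE; exact: F2_neq_add1 last_aN.
rewrite dotDr (dotC x (const_mx 1)) dot_const1 (self_dual_dot sdCt xCt xCt).
by rewrite addr0 (F2_neq0 xa).
Qed.

Lemma transvection_pivot : exists v, [/\ last_entry v = 0, dot v v = 0,
  forall z, z \in A -> z \in Ct -> dot z v = 0 &
  exists2 a, a \in A & a + dot a v *: v = x].
Proof.
have [a aA [xa1 last_a]] := exists_pivot.
have aa0 : dot a a = 0 by rewrite (self_dual_dot sdA).
exists (a + x); split.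
- by rewrite last_entryD last_a F2_addxx.
- rewrite !dotDl !dotDr aa0 (self_dual_dot sdCt xCt xCt) dotC xa1.
  by rewrite add0r addr0 F2_addxx.
- move=> z zA zCt; rewrite dotDr (self_dual_dot sdA zA aA).
  by rewrite (self_dual_dot sdCt zCt xCt) addr0.
- by exists a => //; rewrite dotDr aa0 dotC xa1 add0r scale1r addrA F2_mx_addxx add0r.
Qed.

End Pivot.

Section Existence.
Variables (n : nat) (C Ct : {set 'cV[F2]_n.+1}).
Hypotheses (sdC : self_dual C) (sdCt : self_dual Ct).

Lemma transvection_step P x : orthogonal_mx P ->
  x \in Ct -> x \notin image_code (dsum1 P) C ->
  exists2 Q, orthogonal_mx Q &
    Ct :\: image_code (dsum1 Q) C \proper Ct :\: image_code (dsum1 P) C.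
Proof.
move=> oP xCt xNA.
have [v [v_last vv0 orth_v [a aA a_to_x]]] :=
  transvection_pivot (self_dual_image oP sdC) sdCt xCt xNA.
have uu0 : dot (under v) (under v) = 0 by move: vv0; rewrite dot_under v_last mulr0 addr0.
exists (transvection (under v) *m P).
  by apply: orthogonal_mx_mul => //; apply: orthogonal_mx_transvection.
have imQ y : dsum1 (transvection (under v) *m P) *m y =
    dsum1 P *m y + dot (dsum1 P *m y) v *: v by rewrite dsum1_mulmx dsum1_transvection.
apply/properP; split.
  apply/subsetP => z /setDP [zCt zNQ]; rewrite inE zCt andbT.
  apply: contra zNQ => /imsetP [y yC z_def]; apply/imsetP; exists y => //.
  by rewrite imQ -z_def orth_v ?scale0r ?addr0 // z_def imset_f.
exists x; first by rewrite inE xCt xNA.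
move: aA => /imsetP [y yC a_def]; rewrite inE xCt andbT negbK.
by apply/imsetP; exists y; rewrite // imQ -a_def a_to_x.
Qed.

Lemma self_dual_orthogonal_image :
  exists2 P, orthogonal_mx P & Ct = image_code (dsum1 P) C.
Proof.
pose orthogonalb (P : 'M[F2]_n) := P^T *m P == 1%:M.
have o1 : orthogonalb 1%:M by rewrite /orthogonalb trmx1 mul1mx.
case: (arg_minnP (fun P => #|Ct :\: image_code (dsum1 P) C|) o1).
move=> P /eqP/orthogonal_mxP oP minP; exists P => //.
apply: self_dual_subset_eq (self_dual_image oP sdC) _ => //.
apply/subsetP => x xCt; apply/negPn/negP => xNA.
have [Q /orthogonal_mxP/eqP oQ /proper_card] := transvection_step oP xCt xNA.
by rewrite ltnNge minP.
Qed.

End Existence.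

Section Transfer.
Variables (n : nat) (P : 'M[F2]_n) (C : {set 'cV[F2]_n.+1}).
Hypothesis oP : orthogonal_mx P.
Implicit Type s : seq 'cV[F2]_n.+1.

Local Notation Ct := (image_code (dsum1 P) C).
Local Notation tr s := [seq dsum1 P *m y | y <- s].

Lemma is_basis_image s : is_basis C s -> is_basis Ct (tr s).
Proof.
move=> [free_s span_s].
pose f : 'End('cV[F2]_n.+1) := linfun (mulmx (dsum1 P)).
have -> : tr s = map f s by apply: eq_map => y; rewrite lfunE.
have /lker0P/eqP ker_f : injective f.
  by move=> y z; rewrite !lfunE => /(congr1 (mulmx (dsum1 P^T))); rewrite !dsum1_trK.
split; first by rewrite /free size_map -limg_span limg_dim_eq ?ker_f ?capv0.
move=> x; rewrite -limg_span; apply/imsetP/memv_imgP => [[y yC ->] | [y ys ->]].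
  by exists y; rewrite ?lfunE // -span_s.
by exists y; rewrite ?lfunE // span_s.
Qed.

Lemma even_basis_image s : is_basis C s -> even_basis C s <-> even_basis Ct (tr s).
Proof.
move=> basis_s; rewrite /even_basis; set last1 := fun y => last_entry y == 1.
have -> : count last1 (tr s) = count last1 s.
  by rewrite count_map; apply: eq_count => y; rewrite /last1 /= last_dsum1.
by split=> [[_ ->] | [_ ->]]; split=> //; apply: is_basis_image.
Qed.

Lemma sqv_mulmx (u : 'cV[F2]_n) : sqv (P *m u) = P *m sqv u *m P^T.
Proof. by rewrite /sqv trmx_mul !mulmxA. Qed.

Lemma conj_sum_sqv s :
  \sum_(y <- tr s) sqv (under y) = P *m (\sum_(y <- s) sqv (under y)) *m P^T.
Proof.
rewrite big_map mulmx_sumr mulmx_suml.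
by apply: eq_bigr => y _; rewrite under_dsum1 sqv_mulmx.
Qed.

Lemma conj1 : P *m 1%:M *m P^T = 1%:M.
Proof. by rewrite mulmx1 orthogonal_mx_mulmx_tr. Qed.

Lemma Aprime_image s : Aprime (tr s) = P *m Aprime s *m P^T.
Proof. by rewrite /Aprime mulmxDr mulmxDl conj1 conj_sum_sqv. Qed.

Lemma Adprime_image s : Adprime (tr s) = P *m Adprime s *m P^T.
Proof.
rewrite /Adprime; have -> : \sum_(y <- tr s) under y = P *m \sum_(y <- s) under y.
  by rewrite big_map mulmx_sumr; apply: eq_bigr => y _; rewrite under_dsum1.
by rewrite !mulmxDr !mulmxDl conj1 conj_sum_sqv sqv_mulmx.
Qed.

Lemma inF_image A : inF C A -> inF Ct (P *m A *m P^T).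
Proof.
case=> [[s [[basis_s even_s] ->]] | [m_even [s [basis_s ->]]]].
  by left; exists (tr s); rewrite Aprime_image; split=> //; apply/even_basis_image.
right; split=> //; exists (tr s).
by rewrite Adprime_image; split=> //; apply: is_basis_image.
Qed.

End Transfer.

Unset Implicit Arguments.

Theorem theorem8p10 (n : nat) (Hodd : odd n) (Hn : (3 <= n)%N)
  (C Ct : {set 'cV['F_2]_n.+1}) (HC : self_dual C) (HCt : self_dual Ct) :
  exists P : 'M['F_2]_n,
    orthogonal_mx P /\ Ct = image_code (dsum1 P) C /\
    (forall s : seq 'cV['F_2]_n.+1, is_basis C s ->
       let st := [seq dsum1 P *m y | y <- s] in
       is_basis Ct st /\
       (even_basis C s <-> even_basis Ct st) /\
       (inF C (Aprime s) -> P *m Aprime s *m P^T = Aprime st /\ inF Ct (Aprime st)) /\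
       (inF C (Adprime s) -> P *m Adprime s *m P^T = Adprime st /\ inF Ct (Adprime st))) /\
    (forall A : 'M['F_2]_n, inF Ct A <-> exists A0, inF C A0 /\ A = P *m A0 *m P^T).
Proof.
have [P oP ->] := self_dual_orthogonal_image HC HCt.
exists P; do 2!split=> //; split=> [s basis_s | A].
  rewrite /= Aprime_image // Adprime_image //.
  split; first exact: is_basis_image.
  split; first exact: even_basis_image.
  by split=> inF_s; split=> //; apply: inF_image.
split=> [inF_A | [A0 [inF_A0 ->]]]; last exact: inF_image.
exists (P^T *m A *m P); split.
  by have := inF_image (orthogonal_mx_tr oP) inF_A; rewrite trmxK image_code_trK.
rewrite !mulmxA orthogonal_mx_mulmx_tr // mul1mx.
by rewrite -mulmxA orthogonal_mx_mulmx_tr // mulmx1.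
Qed.
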